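(* Let $\Gamma$ be a finitely generated group which has a sequence of finite normal subgroups $A_i$ with $|A_i|\to\infty$. Then $\mathrm{RG}(\Gamma,(\Gamma_j))=0$ for any chain $(\Gamma_j)$ in $\Gamma$ with $\bigcap_j\Gamma_j=\{1\}$.
   Context: A chain in $\Gamma$ is a decreasing infinite sequence $\Gamma=\Gamma_0>\Gamma_1>\cdots$ of finite index subgroups (not necessarily normal). With $d(H)$ the minimal number of generators of $H$, $r(\Gamma,H)=(d(H)-1)/|\Gamma:H|$ and $\mathrm{RG}(\Gamma,(\Gamma_j))=\lim_j r(\Gamma,\Gamma_j)$. *)

From Stdlib Require Import Reals List Arith.
Import ListNotations.
Open Scope R_scope.

Record group := Group {
  gcar :> Type;
  gmul : gcar -> gcar -> gcar;
  gone : gcar;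
  ginv : gcar -> gcar;
  gmulA : forall x y z, gmul x (gmul y z) = gmul (gmul x y) z;
  gmul1 : forall x, gmul gone x = x;
  gmulV : forall x, gmul (ginv x) x = gone
}.

Arguments gmul {g}. Arguments gone {g}. Arguments ginv {g}.

Section Defs.
Variable G : group.

Definition is_subgroup (H : G -> Prop) : Prop :=
  H gone /\ (forall x y, H x -> H y -> H (gmul x y)) /\ (forall x, H x -> H (ginv x)).

Definition is_normal_subgroup (H : G -> Prop) : Prop :=
  is_subgroup H /\ forall g x, H x -> H (gmul (ginv g) (gmul x g)).

Definition in_gen (S : G -> Prop) (x : G) : Prop :=
  forall K, is_subgroup K -> (forall s, S s -> K s) -> K x.

Definition generated_by (H : G -> Prop) (l : list G) : Prop :=
  (forall s, In s l -> H s) /\ (forall x, H x <-> in_gen (fun s => In s l) x).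

Definition finitely_generated : Prop :=
  exists l, generated_by (fun _ => True) l.

Definition has_rank (H : G -> Prop) (n : nat) : Prop :=
  (exists l, length l = n /\ generated_by H l) /\
  (forall l, generated_by H l -> (n <= length l)%nat).

Definition has_index (H : G -> Prop) (n : nat) : Prop :=
  exists t : list G, length t = n /\
    (forall x, exists i, (i < n)%nat /\ H (gmul (ginv (nth i t gone)) x)) /\
    (forall i j, (i < n)%nat -> (j < n)%nat ->
       H (gmul (ginv (nth i t gone)) (nth j t gone)) -> i = j).

Definition finite_index (H : G -> Prop) : Prop :=
  is_subgroup H /\ exists n, has_index H n.

Definition has_card (P : G -> Prop) (n : nat) : Prop :=
  exists l, length l = n /\ NoDup l /\ forall x, P x <-> In x l.

Definition is_chain (Gam : nat -> G -> Prop) : Prop :=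
  (forall x, Gam 0%nat x) /\
  (forall j, finite_index (Gam j)) /\
  (forall j x, Gam (S j) x -> Gam j x) /\
  (forall j, exists x, Gam j x /\ ~ Gam (S j) x).

End Defs.

Arguments is_subgroup {G}. Arguments is_normal_subgroup {G}.
Arguments has_rank {G}. Arguments has_index {G}. Arguments has_card {G}.
Arguments is_chain {G}. Arguments finite_index {G}.

(* If a finite normal subgroup A meets a subgroup H of index n trivially, then HA has
   index at most n/|A|, so by Schreier's lemma d(HA) <= d(G) n/|A|; generators of HA
   project to generators of H = HA/A, hence (d(H) - 1)/n <= d(G)/|A|.  Since the chain
   has trivial intersection, each finite A_i eventually meets Gamma_j trivially, and the
   |A_i| are unbounded. *)

From Stdlib Require Import Reals List Lia Lra Classical IndefiniteDescription.
Import ListNotations.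
Open Scope nat_scope.

Local Infix "·" := gmul (at level 40, left associativity).

Section GroupLaws.
Context {G : group}.
Implicit Types x y : G.

Lemma mulgV x : x · ginv x = gone.
Proof.
  rewrite <- (gmul1 G (x · ginv x)), <- (gmulV G (ginv x)) at 1.
  rewrite <- gmulA, (gmulA G (ginv x) x), gmulV, gmul1.
  apply gmulV.
Qed.

Lemma mulg1 x : x · gone = x.
Proof. rewrite <- (gmulV G x), gmulA, mulgV, gmul1. reflexivity. Qed.

Lemma invg_uniq x y : x · y = gone -> y = ginv x.
Proof. intro H. rewrite <- (gmul1 G y), <- (gmulV G x), <- gmulA, H, mulg1. reflexivity. Qed.

Lemma invgK x : ginv (ginv x) = x.
Proof. symmetry. apply invg_uniq, gmulV. Qed.

Lemma invgM x y : ginv (x · y) = ginv y · ginv x.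
Proof.
  symmetry. apply invg_uniq.
  rewrite gmulA, <- (gmulA G x y), mulgV, mulg1, mulgV. reflexivity.
Qed.

Lemma invg1 : ginv (@gone G) = gone.
Proof. symmetry. apply invg_uniq, gmul1. Qed.

Lemma mulgK x y : x · y · ginv y = x.
Proof. rewrite <- gmulA, mulgV, mulg1. reflexivity. Qed.

Lemma mulgVK x y : x · ginv y · y = x.
Proof. rewrite <- gmulA, gmulV, mulg1. reflexivity. Qed.

End GroupLaws.

Ltac gsimpl := repeat progress rewrite ?gmulA, ?invgM, ?invgK, ?invg1, ?mulgK, ?mulgVK,
  ?mulgV, ?gmulV, ?gmul1, ?mulg1.

Ltac rewrite_as e := match goal with |- ?P ?y => replace y with e by (gsimpl; reflexivity) end.

Section Subgroups.
Context {G : group}.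
Implicit Types (H K A : G -> Prop) (x y : G).

Lemma subgroup1 H : is_subgroup H -> H gone.
Proof. intros [h _]. exact h. Qed.

Lemma subgroupM H x y : is_subgroup H -> H x -> H y -> H (x · y).
Proof. intros [_ [h _]]. apply h. Qed.

Lemma subgroupV H x : is_subgroup H -> H x -> H (ginv x).
Proof. intros [_ [_ h]]. apply h. Qed.

Lemma subgroupVM H x y : is_subgroup H -> H x -> H y -> H (ginv x · y).
Proof. intros HH Hx Hy. apply (subgroupM H); [exact HH | apply subgroupV |]; assumption. Qed.

Lemma subgroupI H K : is_subgroup H -> is_subgroup K -> is_subgroup (fun x => H x /\ K x).
Proof.
  intros HH HK. split; [|split].
  - split; apply subgroup1; assumption.
  - intros x y [] []; split; apply subgroupM; assumption.
  - intros x []; split; apply subgroupV; assumption.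
Qed.

Definition prodset H A (y : G) : Prop := exists g a, H g /\ A a /\ y = g · a.

Lemma prodset_subgroup H A :
  is_subgroup H -> is_normal_subgroup A -> is_subgroup (prodset H A).
Proof.
  intros HH [HA HAn]. split; [|split].
  - exists gone, gone. split; [|split]; [apply (subgroup1 H) | apply (subgroup1 A) |]; auto.
    gsimpl. reflexivity.
  - intros x y [g [a [Hg [Aa ->]]]] [h [b [Hh [Ab ->]]]].
    exists (g · h), (ginv h · (a · h) · b). repeat split.
    + apply subgroupM; assumption.
    + apply subgroupM; auto.
    + gsimpl. reflexivity.
  - intros x [g [a [Hg [Aa ->]]]].
    exists (ginv g), (ginv (ginv g) · (ginv a · ginv g)). repeat split.
    + apply subgroupV; assumption.
    + apply HAn. apply subgroupV; assumption.
    + gsimpl. reflexivity.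
Qed.

Lemma prodset_l H A x : is_subgroup A -> H x -> prodset H A x.
Proof.
  intros HA Hx. exists x, gone. split; [|split]; [exact Hx | apply (subgroup1 A); exact HA |].
  gsimpl. reflexivity.
Qed.

End Subgroups.

Lemma list_representatives {T : Type} (E : T -> T -> Prop) (l : list T) :
  (forall x, E x x) -> (forall x y, E x y -> E y x) ->
  exists l', NoDup l' /\ (forall x, In x l -> exists y, In y l' /\ E y x) /\
    (forall x y, In x l' -> In y l' -> E x y -> x = y).
Proof.
  intros Erefl Esym. induction l as [|z l [l' [Hnd [Hcov Hsep]]]].
  - exists []. repeat split; [constructor | simpl; tauto | simpl; tauto].
  - destruct (classic (exists y, In y l' /\ E y z)) as [Hz | Hz].
    + exists l'. repeat split; auto. intros x [<- | Hx]; auto.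
    + exists (z :: l'). repeat split.
      * constructor; auto. intros Hin. apply Hz. exists z. auto.
      * intros x [<- | Hx]; [exists z; simpl; auto |].
        destruct (Hcov x Hx) as [y [? ?]]. exists y. simpl. auto.
      * intros x y [Hx | Hx] [Hy | Hy] Exy; subst; auto; exfalso; apply Hz; eauto.
Qed.

Section Transversals.
Context {G : group}.
Implicit Types (H M : G -> Prop) (T : list G) (x y : G).

Definition covers H T := forall x, exists t, In t T /\ H (ginv t · x).

Definition separates H T := forall t u, In t T -> In u T -> H (ginv t · u) -> t = u.

Lemma has_index_covers H n : has_index H n -> exists T, length T = n /\ covers H T.
Proof.
  intros [T [Hlen [Hcov _]]]. exists T. split; [exact Hlen |].
  intros x. destruct (Hcov x) as [i [Hi Hx]].
  exists (nth i T gone). split; [apply nth_In; lia | exact Hx].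
Qed.

Lemma covers_transversal M T :
  is_subgroup M -> covers M T -> exists T', NoDup T' /\ covers M T' /\ separates M T'.
Proof.
  intros HM Hcov.
  destruct (list_representatives (fun t u => M (ginv t · u)) T)
    as [T' [Hnd [HcovT' Hsep]]].
  - intros t. gsimpl. apply (subgroup1 M HM).
  - intros t u Htu. rewrite_as (ginv (ginv t · u)). apply (subgroupV M); assumption.
  - exists T'. split; [exact Hnd | split; [| exact Hsep]].
    intros x. destruct (Hcov x) as [t [Ht Hx]]. destruct (HcovT' t Ht) as [u [Hu Hut]].
    exists u. split; [exact Hu |].
    rewrite_as ((ginv u · t) · (ginv t · x)). apply (subgroupM M); assumption.
Qed.

End Transversals.

Section Schreier.
Context {G : group}.
Variables (S : list G) (M : G -> Prop) (T : list G) (rep : G -> G).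
Hypotheses (HS : generated_by G (fun _ => True) S) (HM : is_subgroup M)
  (Hsep : separates M T) (Hrep : forall x, In (rep x) T /\ M (ginv (rep x) · x)).

Lemma rep_eq x y : M (ginv x · y) -> rep x = rep y.
Proof.
  intros Hxy. destruct (Hrep x) as [Hx Mx], (Hrep y) as [Hy My].
  apply Hsep; [assumption | assumption |].
  rewrite_as ((ginv (rep x) · x) · (ginv x · y) · ginv (ginv (rep y) · y)).
  apply (subgroupM M); [| apply (subgroupM M) | apply (subgroupV M)]; assumption.
Qed.

Lemma rep_id t : In t T -> rep t = t.
Proof. intros Ht. apply Hsep; [apply Hrep | exact Ht | apply Hrep]. Qed.

Definition schreier_set (K : G -> Prop) (g : G) : Prop :=
  forall t, In t T -> K (ginv (rep (g · t)) · (g · t)).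

Lemma schreier_set_subgroup K : is_subgroup K -> is_subgroup (schreier_set K).
Proof.
  intros HK. split; [| split].
  - intros t Ht. rewrite gmul1, (rep_id t Ht). gsimpl. apply (subgroup1 K HK).
  - intros a b Qa Qb t Ht.
    set (w := rep (b · t)). assert (Hw : In w T) by apply Hrep.
    assert (E : rep (a · w) = rep (a · b · t)).
    { apply rep_eq. rewrite_as (ginv w · (b · t)). apply Hrep. }
    rewrite <- E. rewrite_as ((ginv (rep (a · w)) · (a · w)) · (ginv w · (b · t))).
    apply (subgroupM K); [exact HK | apply Qa, Hw | apply Qb, Ht].
  - intros a Qa t Ht.
    set (u := rep (ginv a · t)). assert (Hu : In u T) by apply Hrep.
    assert (E : rep (a · u) = t).
    { rewrite <- (rep_id t Ht). apply rep_eq.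
      rewrite_as (ginv u · (ginv a · t)). apply Hrep. }
    rewrite_as (ginv (ginv t · (a · u))). rewrite <- E.
    apply (subgroupV K); [exact HK | apply Qa, Hu].
Qed.

Definition schreier_generators : list G :=
  map (fun p => ginv (rep (fst p · snd p)) · (fst p · snd p)) (list_prod S T).

Lemma schreier_generators_length : length schreier_generators = length S * length T.
Proof. unfold schreier_generators. rewrite length_map, length_prod. reflexivity. Qed.

Lemma schreier_generated : generated_by G M schreier_generators.
Proof.
  assert (HgenM : forall s, In s schreier_generators -> M s).
  { intros s Hs. apply in_map_iff in Hs as [p [<- _]]. apply Hrep. }
  split; [exact HgenM |]. intros x. split; [| intros Hx; exact (Hx M HM HgenM)].
  intros Mx K HK HgenK.
  (* [T] need not contain [gone]: write x = t0^-1 (y t0) with y = t0 x t0^-1, t0 = rep gone. *)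
  set (t0 := rep gone).
  assert (Mt0 : M t0).
  { rewrite_as (ginv (ginv t0 · gone)). apply (subgroupV M); [exact HM | apply Hrep]. }
  assert (My : M (t0 · x · ginv t0)).
  { apply (subgroupM M); [exact HM | apply (subgroupM M) | apply (subgroupV M)]; assumption. }
  assert (E : rep (t0 · x · ginv t0 · t0) = t0).
  { apply rep_eq. rewrite_as (ginv (t0 · x · ginv t0 · t0)).
    apply (subgroupV M); [exact HM | apply (subgroupM M); assumption]. }
  assert (Hy : schreier_set K (t0 · x · ginv t0)).
  { apply (proj1 (proj2 HS _) I); [apply schreier_set_subgroup, HK |].
    intros s Hs t Ht. apply HgenK, in_map_iff.
    exists (s, t). split; [reflexivity | apply in_prod; assumption]. }
  rewrite_as (ginv t0 · (t0 · x · ginv t0 · t0)). rewrite <- E at 1.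
  apply Hy, Hrep.
Qed.

End Schreier.

Lemma schreier_bound {G : group} (S : list G) (M : G -> Prop) (T : list G) :
  generated_by G (fun _ => True) S -> is_subgroup M -> covers M T -> separates M T ->
  exists L, generated_by G M L /\ length L = length S * length T.
Proof.
  intros HS HM Hcov Hsep. destruct (functional_choice _ Hcov) as [rep Hrep].
  exists (schreier_generators S T rep).
  split; [apply schreier_generated | apply schreier_generators_length]; assumption.
Qed.

Lemma NoDup_list_prod {A B : Type} (l : list A) (l' : list B) :
  NoDup l -> NoDup l' -> NoDup (list_prod l l').
Proof.
  induction 1 as [|x l Hx Hl IH]; intros Hl'; simpl; [constructor |].
  apply NoDup_app; [| auto |].
  - apply NoDup_map_NoDup_ForallPairs; [| assumption].
    intros a b _ _ e. injection e. trivial.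
  - intros [a b] Ha Hb. apply in_map_iff in Ha. destruct Ha as [c [e _]]. injection e as -> ->.
    apply in_prod_iff in Hb. destruct Hb. contradiction.
Qed.

Section ProductWithNormal.
Context {G : group}.
Variables (Gam A : G -> Prop).
Hypotheses (HGam : is_subgroup Gam) (HA : is_normal_subgroup A)
  (Htriv : forall x, Gam x -> A x -> x = gone).

Lemma separates_prodset_length (la T T' : list G) :
  NoDup la -> (forall x, In x la -> A x) -> covers Gam T ->
  NoDup T' -> separates (prodset Gam A) T' -> length T' * length la <= length T.
Proof.
  intros Hla HAla Hcov HT' Hsep. destruct (functional_choice _ Hcov) as [rep Hrep].
  (* (t, a) |-> the Gam-coset of t a is injective on T' x la. *)
  pose proof (proj1 HA) as HAsub.
  rewrite <- length_prod, <- (length_map (fun p => rep (fst p · snd p))).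
  apply NoDup_incl_length.
  - apply NoDup_map_NoDup_ForallPairs; [| apply NoDup_list_prod; assumption].
    intros [t a] [t' b] Hp Hp' E; simpl in E.
    apply in_prod_iff in Hp as [Ht Ha], Hp' as [Ht' Hb]. apply HAla in Ha, Hb.
    assert (Hg : Gam (ginv (t · a) · (t' · b))).
    { rewrite_as (ginv (ginv (rep (t' · b)) · (t · a)) · (ginv (rep (t' · b)) · (t' · b))).
      apply (subgroupVM Gam); [exact HGam | rewrite <- E; apply Hrep | apply Hrep]. }
    set (g := ginv (t · a) · (t' · b)) in Hg.
    assert (Ett : t = t').
    { apply Hsep; [assumption | assumption |].
      exists g, (ginv g · (a · g) · ginv b). split; [exact Hg | split].
      - apply (subgroupM A); [exact HAsub | apply HA, Ha | apply (subgroupV A); assumption].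
      - unfold g. gsimpl. reflexivity. }
    subst t'.
    assert (E' : ginv a · b = gone).
    { apply Htriv; [| apply (subgroupVM A); assumption].
      unfold g in Hg. rewrite_as (ginv (t · a) · (t · b)). exact Hg. }
    f_equal. rewrite_as (a · (ginv a · b)). rewrite E', mulg1. reflexivity.
  - intros c Hc. apply in_map_iff in Hc as [p [<- _]]. apply Hrep.
Qed.

Lemma prodset_generators_project (LM : list G) :
  generated_by G (prodset Gam A) LM -> exists LG, generated_by G Gam LG /\ length LG = length LM.
Proof.
  intros [HLM Hgen]. pose proof (proj1 HA) as HAsub.
  assert (Hsplit : exists f : G -> G, forall y, In y LM -> Gam (f y) /\ A (ginv (f y) · y)).
  { apply (functional_choice (fun y g => In y LM -> Gam g /\ A (ginv g · y))).
    intros y. destruct (classic (In y LM)) as [Hy | Hy].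
    - destruct (HLM y Hy) as [g [a [Hg [Ha ->]]]].
      exists g. intros _. split; [exact Hg |]. rewrite_as a. exact Ha.
    - exists gone. tauto. }
  destruct Hsplit as [f Hf].
  assert (HLG : forall s, In s (map f LM) -> Gam s).
  { intros s Hs. apply in_map_iff in Hs as [y [<- Hy]]. apply Hf, Hy. }
  exists (map f LM). split; [split; [exact HLG |] | apply length_map].
  intros x. split; [| intros Hx; exact (Hx Gam HGam HLG)].
  intros Gx K HK HKgen.
  assert (Hx : prodset (fun g => Gam g /\ K g) A x).
  { apply (proj1 (Hgen x)); [apply prodset_l; assumption | |].
    - apply prodset_subgroup; [apply subgroupI |]; assumption.
    - intros y Hy. exists (f y), (ginv (f y) · y).
      split; [split; [apply Hf, Hy | apply HKgen, in_map, Hy] | split; [apply Hf, Hy |]].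
      gsimpl. reflexivity. }
  destruct Hx as [g [a [[Gg Kg] [Aa ->]]]].
  assert (Ga : Gam a) by (rewrite_as (ginv g · (g · a)); apply (subgroupVM Gam); assumption).
  rewrite (Htriv a Ga Aa), mulg1. exact Kg.
Qed.

Lemma rank_index_bound (S la : list G) (n d : nat) :
  generated_by G (fun _ => True) S -> NoDup la -> (forall x, In x la -> A x) ->
  has_index Gam n -> has_rank Gam d -> (d - 1) * length la <= length S * n.
Proof.
  intros HS Hla HAla Hidx [_ Hmin].
  destruct (has_index_covers Gam n Hidx) as [T [<- HT]].
  pose proof (prodset_subgroup Gam A HGam HA) as HM.
  assert (HTM : covers (prodset Gam A) T).
  { intros x. destruct (HT x) as [t [Ht Hx]].
    exists t. split; [exact Ht | apply prodset_l; [apply HA | exact Hx]]. }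
  destruct (covers_transversal _ T HM HTM) as [T' [HndT' [HcovT' HsepT']]].
  pose proof (separates_prodset_length la T T' Hla HAla HT HndT' HsepT') as Hcount.
  destruct (schreier_bound S _ T' HS HM HcovT' HsepT') as [LM [HLM HlenM]].
  destruct (prodset_generators_project LM HLM) as [LG [HLG HlenG]].
  pose proof (Hmin LG HLG) as Hd.
  nia.
Qed.

End ProductWithNormal.

Section Chains.
Context {G : group}.
Variable Gam : nat -> G -> Prop.
Hypothesis Hdecr : forall j x, Gam (S j) x -> Gam j x.

Lemma chain_antitone j j' x : j <= j' -> Gam j' x -> Gam j x.
Proof. induction 1; auto. Qed.

Lemma chain_eventually_avoids (l : list G) :
  (forall x, (forall j, Gam j x) -> x = gone) ->
  exists J, forall j, J <= j -> forall x, In x l -> Gam j x -> x = gone.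
Proof.
  intros Hint. induction l as [|z l [J HJ]].
  - exists 0. simpl. tauto.
  - destruct (classic (z = gone)) as [Hz | Hz].
    + exists J. intros j Hj x [<- | Hx] Gx; eauto.
    + assert (Hnot : exists j1, ~ Gam j1 z).
      { apply not_all_ex_not. intros Hall. apply Hz, Hint, Hall. }
      destruct Hnot as [j1 Hj1].
      exists (Nat.max J j1). intros j Hj x [<- | Hx] Gx.
      * exfalso. apply Hj1, (chain_antitone j1 j); [lia | exact Gx].
      * apply (HJ j); [lia | assumption | assumption].
Qed.

End Chains.

Lemma chain_subgroup {G : group} (Gam : nat -> G -> Prop) j :
  is_chain Gam -> is_subgroup (Gam j).
Proof. intros [_ [Hfi _]]. apply Hfi. Qed.

Lemma chain_decreasing {G : group} (Gam : nat -> G -> Prop) :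
  is_chain Gam -> forall j x, Gam (S j) x -> Gam j x.
Proof. intros [_ [_ [Hdecr _]]]. exact Hdecr. Qed.

Lemma chain_nontrivial {G : group} (Gam : nat -> G -> Prop) j :
  is_chain Gam -> exists x, Gam j x /\ x <> gone.
Proof.
  intros Hch. destruct (proj2 (proj2 (proj2 Hch)) j) as [x [Gx nGx]].
  exists x. split; [exact Gx |]. intros ->.
  apply nGx, (subgroup1 (Gam (S j))), chain_subgroup, Hch.
Qed.

Lemma has_rank_pos {G : group} (H : G -> Prop) d x :
  has_rank H d -> H x -> x <> gone -> 1 <= d.
Proof.
  intros [[l [Hl [_ Hgen]]] _] Hx Hx1. destruct d; [| lia]. exfalso.
  destruct l; [| discriminate Hl].
  apply Hx1, (proj1 (Hgen x) Hx (fun y => y = gone)); [| simpl; tauto].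
  split; [reflexivity | split].
  - intros a b -> ->. apply gmul1.
  - intros a ->. apply invg1.
Qed.

Lemma has_index_pos {G : group} (H : G -> Prop) n : has_index H n -> 1 <= n.
Proof. intros [T [_ [Hcov _]]]. destruct (Hcov gone) as [i [Hi _]]. lia. Qed.

Open Scope R_scope.

Lemma archimedean_nat (k eps : R) :
  0 < eps -> exists N : nat, forall a : nat, (N <= a)%nat -> k < INR a * eps.
Proof.
  intros Heps. destruct (INR_unbounded (k / eps)) as [N HN].
  exists N. intros a Ha. apply le_INR in Ha.
  assert (Hk : k / eps * eps = k) by (field; lra).
  assert (k / eps * eps < INR a * eps) by (apply Rmult_lt_compat_r; lra).
  lra.
Qed.

Lemma ratio_lt (x n a k eps : R) :
  0 < eps -> 0 <= k -> 1 <= x -> 1 <= n -> (x - 1) * a <= k * n -> k < a * eps ->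
  Rabs ((x - 1) / n) < eps.
Proof.
  intros Heps Hk0 Hx Hn Hxa Hka.
  assert (Hq : (x - 1) / n * n = x - 1) by (field; lra).
  set (q := (x - 1) / n) in *.
  assert (Ha : 0 < a) by nra.
  assert (Hkn : k * n < a * eps * n) by nra.
  assert (Hlt : q * (n * a) < eps * (n * a)).
  { replace (q * (n * a)) with ((x - 1) * a) by (rewrite <- Hq; ring). lra. }
  rewrite Rabs_pos_eq by nra.
  apply (Rmult_lt_reg_r (n * a)); [nra | exact Hlt].
Qed.

Theorem proposition4 (G : group) (A : nat -> G -> Prop) (a : nat -> nat) :
  finitely_generated G ->
  (forall i, is_normal_subgroup (A i)) ->
  (forall i, has_card (A i) (a i)) ->
  (forall N : nat, exists i0 : nat, forall i : nat, (i0 <= i)%nat -> (N <= a i)%nat) ->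
  forall (Gam : nat -> G -> Prop),
    is_chain Gam ->
    (forall x, (forall j, Gam j x) -> x = gone) ->
    forall d idx : nat -> nat,
      (forall j, has_rank (Gam j) (d j)) ->
      (forall j, has_index (Gam j) (idx j)) ->
      Un_cv (fun j => (INR (d j) - 1) / INR (idx j)) 0.
Proof.
  intros [S HS] HA Hcard Hgrow Gam Hch Hint d idx Hd Hidx eps Heps.
  destruct (archimedean_nat (INR (length S)) eps Heps) as [N HN].
  destruct (Hgrow N) as [i Hi].
  destruct (Hcard i) as [la [Hlen [Hla HAla]]].
  destruct (chain_eventually_avoids Gam (chain_decreasing Gam Hch) la Hint) as [J HJ].
  exists J. intros j Hj.
  destruct (chain_nontrivial Gam j Hch) as [x [Gx Hx1]].
  pose proof (has_rank_pos _ _ x (Hd j) Gx Hx1) as Hd1.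
  assert (Hbound : ((d j - 1) * a i <= length S * idx j)%nat).
  { rewrite <- Hlen.
    apply (rank_index_bound (Gam j) (A i) (chain_subgroup Gam j Hch) (HA i));
      [| exact HS | exact Hla | intros y Hy; apply HAla, Hy | apply Hidx | apply Hd].
    intros y Gy Ay. apply (HJ j Hj); [apply HAla |]; assumption. }
  apply le_INR in Hbound. rewrite !mult_INR, minus_INR in Hbound by exact Hd1.
  unfold Rdist. rewrite Rminus_0_r.
  apply (ratio_lt _ _ (INR (a i)) (INR (length S))).
  - exact Heps.
  - apply pos_INR.
  - apply (le_INR 1), Hd1.
  - apply (le_INR 1), (has_index_pos _ _ (Hidx j)).
  - exact Hbound.
  - apply HN, Hi, le_n.
Qed.
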